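(* Let $G=(V,v,E)$ be a directed graph with node set $V=\{1,\dots,n\}$, target node $v\in V$ and edge set $E$, and let $Z$ be a set of ordered pairs of nodes (hidden edges) with $Z\cap E=\emptyset$. For $\mathbf{y}\in\{0,1\}^{Z}$ with support $Y=\{(i,j)\in Z: y_{(i,j)}=1\}$, let $\mathcal{FR}(\mathbf{y})$ denote the expected first return time to $v$ of the PageRank random walk on the graph $(V,E\cup Y)$. Let $\mathcal{Y}$ be a set of constraints on $\mathbf{y}$ with $\mathcal{Y}\cap\{0,1\}^{Z}\neq\emptyset$. For disjoint $S,N\subseteq Z$ let $$\gamma(S,N)=\min\{\mathcal{FR}(\mathbf{y}): y_{(i,j)}=1\ \forall (i,j)\in S,\ y_{(i,j)}=0\ \forall (i,j)\in N,\ \mathbf{y}\in\{0,1\}^{Z}\}.$$ Let $\bar{\mathbf{y}}\in\mathcal{Y}\cap\{0,1\}^{Z}$ with support $\bar Y$. Then the inequality $$\theta\ \ge\ \mathcal{FR}(\bar{\mathbf{y}})+\sum_{(i,j)\in\bar Y}\min\{0,\gamma(\emptyset,\{(i,j)\})-\mathcal{FR}(\bar{\mathbf{y}})\}(1-y_{(i,j)})+\sum_{(i,j)\in Z\setminus\bar Y}\min\{0,\gamma(\{(i,j)\},\emptyset)-\mathcal{FR}(\bar{\mathbf{y}})\}\,y_{(i,j)}$$ is valid, i.e. it is satisfied by every pair $(\theta,\mathbf{y})$ with $\mathbf{y}\in\mathcal{Y}\cap\{0,1\}^{Z}$, $\theta\in\mathbb{R}_+$ and $\theta\ge\mathcal{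FR}(\mathbf{y})$.
   Context: The PageRank value of $v$ equals the reciprocal of the expected first return time to $v$ (expected number of steps for the PageRank random walk, i.e. the random walk defined by the PageRank/Google matrix with fixed damping and teleportation as in Csáji–Jungers–Blondel, started at $v$ to return to $v$). In particular $\mathcal{FR}(\mathbf{y})\ge 0$ for all $\mathbf{y}$. The optimization problem considered is $\min\{\mathcal{FR}(\mathbf{y}):\mathbf{y}\in\mathcal{Y}\cap\{0,1\}^{Z}\}$, written in epigraph form with a variable $\theta\in\mathbb{R}_+$ satisfying $\theta\ge\mathcal{FR}(\mathbf{y})$. *)

From HB Require Import structures.
From mathcomp Require Import all_boot all_order all_algebra.
From mathcomp Require Import all_classical all_reals all_analysis.
Set Implicit Arguments. Unset Strict Implicit. Unset Printing Implicit Defensive.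
Import Order.TTheory GRing.Theory Num.Theory.
Local Open Scope ring_scope.

Section PageRank.
Variables (R : realType) (n : nat).

Definition outdeg (E : {set 'I_n * 'I_n}) (i : 'I_n) : nat :=
  #|[set j | (i, j) \in E]|.

(* row-stochastic matrix of the simple random walk, dangling nodes jump
   uniformly (Csaji--Jungers--Blondel) *)
Definition Smx (E : {set 'I_n * 'I_n}) : 'M[R]_n :=
  \matrix_(i, j) (if outdeg E i == 0%N then n%:R^-1
                  else ((i, j) \in E)%:R / (outdeg E i)%:R).

Definition google (c : R) (z : 'I_n -> R) (E : {set 'I_n * 'I_n}) : 'M[R]_n :=
  \matrix_(i, j) (c * Smx E i j + (1 - c) * z j).

Definition taboo (P : 'M[R]_n) (v : 'I_n) : 'M[R]_n :=
  \matrix_(i, j) (if j == v then 0 else P i j).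

(* probability that the walk started at v first returns to v at step k >= 1 *)
Definition first_return_prob (P : 'M[R]_n) (v : 'I_n) (k : nat) : R :=
  ((taboo P v ^+ k.-1) *m P) v v.

Definition FR (c : R) (z : 'I_n -> R) (v : 'I_n) (E : {set 'I_n * 'I_n}) : R :=
  limn (fun N : nat => \sum_(1 <= k < N) (k%:R * first_return_prob (google c z E) v k)).

(* gamma(S,N): min of FR(y) over binary y on Z (encoded by its support Y \subset Z)
   with y = 1 on S and y = 0 on N *)
Definition feasibleSN (Z S N : {set 'I_n * 'I_n}) : set {set 'I_n * 'I_n} :=
  fun Y => [/\ Y \subset Z, S \subset Y & [disjoint Y & N]].

Definition gammaSN (c : R) (z : 'I_n -> R) (v : 'I_n) (E Z S N : {set 'I_n * 'I_n}) : R :=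
  inf ((fun Y => FR c z v (E :|: Y)) @` feasibleSN Z S N)%classic.

End PageRank.

From HB Require Import structures.
From mathcomp Require Import all_boot all_order all_algebra.
From mathcomp Require Import all_classical all_reals all_analysis.
From mathcomp Require Import lra.
Set Implicit Arguments.
Unset Strict Implicit.
Unset Printing Implicit Defensive.

Import Order.TTheory GRing.Theory Num.Theory.
Local Open Scope ring_scope.

(* Only one property of [gammaSN] matters: it bounds [FR] from below on
   every feasible face.  If
   [Y = Ybar] every correction term is nonpositive; otherwise some [e] in the
   symmetric difference of [Y] and [Ybar] contributes a term
   [min 0 (gamma_e - FR Ybar) <= FR Y - FR Ybar], and all others are
   nonpositive. *)

Lemma inf_image_le (R : realType) (X : finType) (f : X -> R) (A : set X) (x : X) :
  A x -> inf [set f a | a in A]%classic <= f x.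
Proof.
move=> Ax; apply: ge_inf; last by exists x.
exists (- \sum_(a : X) `|f a|) => _ [a _ <-].
rewrite lerNl (le_trans (ler_norm _)) // normrN.
by rewrite (bigD1 a) //= lerDl sumr_ge0.
Qed.

Lemma gammaSN_le (R : realType) (n : nat) (c : R) (z : 'I_n -> R) (v : 'I_n)
    (E Z S N Y : {set 'I_n * 'I_n}) :
  feasibleSN Z S N Y -> gammaSN c z v E Z S N <= FR c z v (E :|: Y).
Proof. exact: inf_image_le. Qed.

Lemma min0_mul_le0 (R : realDomainType) (x y : R) :
  0 <= y -> Num.min 0 x * y <= 0.
Proof. by move=> y_ge0; rewrite mulr_le0_ge0 // ge_min lexx. Qed.

Section MinZeroSums.
Variables (R : realDomainType) (I : finType) (A : {pred I}) (a w : I -> R).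
Hypothesis w_ge0 : forall i, 0 <= w i.

Lemma sum_min0_le0 : \sum_(i in A) Num.min 0 (a i) * w i <= 0.
Proof. by apply: sumr_le0 => i _; apply: min0_mul_le0. Qed.

Lemma sum_min0_le_term i0 :
  i0 \in A -> w i0 = 1 -> \sum_(i in A) Num.min 0 (a i) * w i <= a i0.
Proof.
move=> Ai0 wi0; rewrite (bigD1 i0) //= wi0 mulr1 -[leRHS]addr0.
by rewrite lerD ?ge_min ?lexx ?orbT // sumr_le0 // => i _; apply: min0_mul_le0.
Qed.

End MinZeroSums.

Section BinaryCut.
Variables (R : realDomainType) (T : finType) (f : {set T} -> R).
Variables (g_out g_in : T -> R) (Z Ybar Y : {set T}).
Hypotheses (sYZ : Y \subset Z)
  (g_out_le : forall e, e \in Ybar -> e \notin Y -> g_out e <= f Y)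
  (g_in_le : forall e, e \in Y -> e \notin Ybar -> g_in e <= f Y).

Let cut_out := \sum_(e in Ybar) Num.min 0 (g_out e - f Ybar) * (1 - (e \in Y)%:R).
Let cut_in := \sum_(e in Z :\: Ybar) Num.min 0 (g_in e - f Ybar) * (e \in Y)%:R.

Let weight_out_ge0 e : 0 <= 1 - (e \in Y)%:R :> R.
Proof. by case: (e \in Y); rewrite /= ?subrr ?subr0. Qed.

Let weight_in_ge0 e : 0 <= (e \in Y)%:R :> R.
Proof. exact: ler0n. Qed.

Lemma binary_cut_valid : f Ybar + cut_out + cut_in <= f Y.
Proof.
have out_le0 : cut_out <= 0 by apply: sum_min0_le0.
have in_le0 : cut_in <= 0 by apply: sum_min0_le0.
have [<-|neYYbar] := eqVneq Y Ybar; first by lra.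
have [sYbarY | /subsetPn [e eYbar eNY]] := boolP (Ybar \subset Y).
  have /subsetPn [e eY eNYbar] : ~~ (Y \subset Ybar).
    by apply: contra neYYbar => sYYbar; rewrite finset.eqEsubset sYYbar.
  have : cut_in <= g_in e - f Ybar.
    by apply: sum_min0_le_term => //; rewrite ?eY // inE eNYbar (fintype.subsetP sYZ).
  by have := g_in_le eY eNYbar; lra.
have : cut_out <= g_out e - f Ybar.
  by apply: sum_min0_le_term => //; rewrite (negbTE eNY) subr0.
by have := g_out_le eYbar eNY; lra.
Qed.

End BinaryCut.

Theorem theorem1 (R : realType) (n : nat) (c : R) (z : 'I_n -> R) (v : 'I_n)
    (E Z : {set 'I_n * 'I_n}) (Ycal : {set 'I_n * 'I_n} -> Prop) :
  0 < c < 1 ->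
  (forall j, 0 < z j) -> \sum_j z j = 1 ->
  Z :&: E = finset.set0 ->
  (exists Y : {set 'I_n * 'I_n}, Y \subset Z /\ Ycal Y) ->
  forall Ybar : {set 'I_n * 'I_n}, Ybar \subset Z -> Ycal Ybar ->
  forall (theta : R) (Y : {set 'I_n * 'I_n}),
    Y \subset Z -> Ycal Y -> 0 <= theta -> FR c z v (E :|: Y) <= theta ->
    FR c z v (E :|: Ybar)
    + \sum_(e in Ybar)
        Num.min 0 (gammaSN c z v E Z finset.set0 [set e] - FR c z v (E :|: Ybar))
          * (1 - (e \in Y)%:R)
    + \sum_(e in Z :\: Ybar)
        Num.min 0 (gammaSN c z v E Z [set e] finset.set0 - FR c z v (E :|: Ybar))
          * (e \in Y)%:R
    <= theta.
Proof.
move=> _ _ _ _ _ Ybar _ _ theta Y sYZ _ _ FR_le_theta.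
apply: le_trans FR_le_theta.
apply: (binary_cut_valid (f := fun X => FR c z v (E :|: X))) => // e.
- move=> _ eNY; apply: gammaSN_le; split => //.
  + exact: finset.sub0set.
  + by rewrite disjoint_sym disjoints1.
- move=> eY _; apply: gammaSN_le; split => //.
  + by rewrite finset.sub1set.
  + by rewrite finset.disjoints_subset finset.setC0 finset.subsetT.
Qed.
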